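(* Let $\rho_p>0$, $\bar\rho_{ac}>0$, $\bar v_a>0$, $\bar u_d>0$, $C_D>0$, $\rho_{sn,p}>0$, $\Delta T^g_d\ge 0$, an integer $\delta\ge2$, and defender positions $\mathbf{R}_d=[\mathbf{r}_{d1},\dots,\mathbf{r}_{dN_d}]$ in $\mathbb{R}^3$ be given. For a unit vector $\mathbf{u}$, let $f_{\mathbf{u}}(R)=\bar\rho_{ac}+R+\bar v_a\big(\bar T_d(\bar\varrho_d(R))+\Delta T^g_d\big)$ with $\bar\varrho_d(R)=\big(\sum_{j}\|R\mathbf{u}-\mathbf{r}_{dj}\|^\delta\big)^{1/\delta}+\rho_{sn,p}$ and $\bar T_d$ as defined in the context, and suppose $\underline{R}_{ac}(\mathbf{u}):=\min_{R>\rho_p}f_{\mathbf{u}}(R)$ is attained at some $\hat R>\rho_p$. Let $T_a(\mathbf{r},\mathbf{p},\bar\rho_{ac})$ denote the minimum time for the attackers' center starting at $\mathbf{r}$ to reach within distance $\bar\rho_{ac}$ of $\mathbf{p}$, and let $T_d(\mathbf{R}_d,\mathbf{p})$ denote the maximum time needed by the defenders to achieve the planar gathering formation centered at $\mathbf{p}$ (oriented towards the attackers). Assume that for all $R>\rho_p$: $T_d(\mathbf{R}_d,R\mathbf{u})\le\bar T_d(\bar\varrho_d(R))$, and $T_a(\mathbf{r},R\mathbf{u},\bar\rho_{ac})\ge(\|\mathbf{r}\|-R-\bar\rho_{ac})/\bar v_a$ whenever $\mathbf{r}=\|\mathbf{r}\|\mathbf{u}$. Define $Dom_{est}=\{\mathbf{r}\in\mathbb{R}^3\setminus\{0\}:\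 \|\mathbf{r}\|\ge\underline{R}_{ac}(\mathbf{r}/\|\mathbf{r}\|)\}$ (over directions where the minimum is attained). Then every attacker-center initial position $\mathbf{r}\in Dom_{est}$ belongs to the defenders' dominance region $Dom(\mathbf{R}_d,\bar\rho_{ac},\Delta T^g_d)$, i.e. there exists $\upsilon\in\big(\frac{\rho_p}{\|\mathbf{r}\|},1-\frac{\bar\rho_{ac}}{\|\mathbf{r}\|}\big)$ such that, with $\mathbf{r}_{df^g}=\upsilon\mathbf{r}$ (a point on the shortest path from $\mathbf{r}$ to the protected area), $T_a(\mathbf{r},\mathbf{r}_{df^g},\bar\rho_{ac})-T_d(\mathbf{R}_d,\mathbf{r}_{df^g})\ge\Delta T^g_d$; that is, the defenders are guaranteed to achieve the planar gathering formation at $\mathbf{r}_{df^g}$ at least $\Delta T^g_d$ before the attackers reach that position.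
   Context: The protected area is the ball of radius $\rho_p$ centered at the origin. $\bar v_a$ is the attackers' maximum speed, $\bar\rho_{ac}$ the maximum connectivity radius of the attacker swarm around its center of mass, $\rho_{sn,p}$ the radius of the defenders' planar gathering formation, and $\Delta T^g_d\ge0$ a user-defined time margin. $\bar T_d(\varrho)=\frac{1}{\lambda_0}\big(\tanh^{-1}(v_{sw}/\bar v_d)+\tan^{-1}(v_{sw}/\bar v_d)\big)$ with $\lambda_0=\sqrt{\bar u_dC_D}$, $\bar v_d=\sqrt{\bar u_d/C_D}$, $v_{sw}=\sqrt{\frac{(\lambda-1)\bar u_d}{(\lambda+1)C_D}}$, $\lambda=e^{2C_D\varrho}$ (time-optimal travel time over distance $\varrho$ from rest under acceleration bound $\bar u_d$ and quadratic drag $C_D$). The dominance region is $Dom(\mathbf{R}_d,\bar\rho_{ac},\Delta T^g_d)=\{\mathbf{r}\in\mathbb{R}^3:\exists\upsilon\in(\rho_p/\|\mathbf{r}\|,1-\bar\rho_{ac}/\|\mathbf{r}\|)\text{ with } T_a(\mathbf{r},\upsilon\mathbf{r},\bar\rho_{ac})-T_d(\mathbf{R}_d,\upsilon\mathbf{r})\ge\Delta T^g_d\}$. *)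

From HB Require Import structures.
From mathcomp Require Import all_boot all_order all_algebra.
From mathcomp Require Import all_classical all_reals all_analysis.
Set Implicit Arguments. Unset Strict Implicit. Unset Printing Implicit Defensive.
Import Order.TTheory GRing.Theory Num.Theory.
Local Open Scope ring_scope.

Definition vec3 (R : realType) := 'rV[R]_3.

Definition enorm {R : realType} (v : vec3 R) : R :=
  Num.sqrt (\sum_(i < 3) (v ord0 i) ^+ 2).

Definition artanh {R : realType} (x : R) : R := ln ((1 + x) / (1 - x)) / 2.

(* time-optimal travel time over distance rho from rest, acceleration bound ud, drag CD *)
Definition Tbar_d {R : realType} (ud CD rho : R) : R :=
  let lambda0 := Num.sqrt (ud * CD) in
  let vbar_d := Num.sqrt (ud / CD) in
  let lambda := expR (2 * CD * rho) in
  let v_sw := Num.sqrt ((lambda - 1) * ud / ((lambda + 1) * CD)) in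
  (artanh (v_sw / vbar_d) + atan (v_sw / vbar_d)) / lambda0.

Definition varrho_bar {R : realType} (delta Nd : nat) (rd : 'I_Nd -> vec3 R)
  (rho_snp : R) (u : vec3 R) (Rr : R) : R :=
  powR (\sum_(j < Nd) enorm (Rr *: u - rd j) ^+ delta) (delta%:R^-1) + rho_snp.

Definition f_u {R : realType} (ud CD rho_ac va dT rho_snp : R) (delta Nd : nat)
  (rd : 'I_Nd -> vec3 R) (u : vec3 R) (Rr : R) : R :=
  rho_ac + Rr + va * (Tbar_d ud CD (varrho_bar delta rd rho_snp u Rr) + dT).

Definition Dom {R : realType} (Nd : nat)
  (Ta : vec3 R -> vec3 R -> R -> R) (Td : ('I_Nd -> vec3 R) -> vec3 R -> R)
  (rho_p : R) (rd : 'I_Nd -> vec3 R) (rho_ac dT : R) (r : vec3 R) : Prop :=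
  exists ups : R,
    rho_p / enorm r < ups /\ ups < 1 - rho_ac / enorm r /\
    Ta r (ups *: r) rho_ac - Td rd (ups *: r) >= dT.

From HB Require Import structures.
From mathcomp Require Import all_boot all_order all_algebra.
From mathcomp Require Import all_classical all_reals all_analysis.
From mathcomp Require Import ring lra.
Set Implicit Arguments. Unset Strict Implicit. Unset Printing Implicit Defensive.
Import Order.TTheory GRing.Theory Num.Theory.
Local Open Scope ring_scope.

(* Let n = ||r|| and take the gathering point r_df = (Rhat/n) r,
   which equals Rhat u since r points along u.  Then:
   - the defenders need at most Tbar_d(varrho_bar(Rhat)) to gather there;
   - the attackers need at least (n - Rhat - rho_ac)/va to reach it;
   - the hypothesis n >= f_u(Rhat) = rho_ac + Rhat + va (Tbar_d + dT) says
     exactly that the second bound exceeds the first by dT.  The only analytic input is Tbar_d > 0 (travel time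
   over a positive distance is positive), which makes f_u(Rhat) > rho_ac + Rhat
   and hence puts the parameter Rhat/n strictly inside the admissible interval
   (rho_p/n, 1 - rho_ac/n). *)

(* artanh is positive on (0,1): there (1+x)/(1-x) > 1. *)
Lemma artanh_gt0 (R : realType) (x : R) : 0 < x < 1 -> 0 < artanh x.
Proof.
case/andP=> x_gt0 x_lt1; rewrite /artanh divr_gt0 // ln_gt0 //.
by rewrite ltr_pdivlMr ?subr_gt0 // mul1r; lra.
Qed.

Lemma switching_speed_ratio (R : realType) (ud CD rho : R) :
  0 < ud -> 0 < CD -> 0 < rho ->
  0 < Num.sqrt ((expR (2 * CD * rho) - 1) * ud / ((expR (2 * CD * rho) + 1) * CD))
      / Num.sqrt (ud / CD) < 1.
Proof.
move=> ud_gt0 CD_gt0 rho_gt0; set lam := expR _.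
have lam_gt1 : 1 < lam by rewrite expR_gt1 !mulr_gt0.
have vbar_gt0 : 0 < Num.sqrt (ud / CD) by rewrite sqrtr_gt0 divr_gt0.
apply/andP; split.
  by rewrite divr_gt0 // sqrtr_gt0 !divr_gt0 ?mulr_gt0 //; lra.
rewrite ltr_pdivrMr // mul1r ltr_sqrt ?divr_gt0 //.
rewrite ltr_pdivrMr ?mulr_gt0 //; last by lra.
have -> : ud / CD * ((lam + 1) * CD) = ud * (lam + 1)
  by field; rewrite gt_eqF.
nra.
Qed.

Lemma Tbar_d_gt0 (R : realType) (ud CD rho : R) :
  0 < ud -> 0 < CD -> 0 < rho -> 0 < Tbar_d ud CD rho.
Proof.
move=> ud_gt0 CD_gt0 rho_gt0.
have /andP[x_gt0 x_lt1] := switching_speed_ratio ud_gt0 CD_gt0 rho_gt0.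
rewrite /Tbar_d divr_gt0 ?sqrtr_gt0 ?mulr_gt0 // addr_gt0 //.
  by rewrite artanh_gt0 // x_gt0 x_lt1.
by rewrite -(atan0 R) lt_atan.
Qed.

Lemma varrho_bar_gt0 (R : realType) (delta Nd : nat) (rd : 'I_Nd -> vec3 R)
    (rho_snp : R) (u : vec3 R) (Rr : R) :
  0 < rho_snp -> 0 < varrho_bar delta rd rho_snp u Rr.
Proof. by move=> rho_snp_gt0; rewrite /varrho_bar ltr_wpDl // powR_ge0. Qed.

Lemma time_margin (R : realType) (n Rr rho_ac va Tb dT ta td : R) :
  0 < va -> rho_ac + Rr + va * (Tb + dT) <= n ->
  (n - Rr - rho_ac) / va <= ta -> td <= Tb -> dT <= ta - td.
Proof.
move=> va_gt0 n_ge ta_ge td_le.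
have : Tb + dT <= (n - Rr - rho_ac) / va by rewrite ler_pdivlMr //; lra.
lra.
Qed.

Lemma scale_on_ray (R : realType) (u r : vec3 R) (n Rr : R) :
  0 < n -> r = n *: u -> (Rr / n) *: r = Rr *: u.
Proof. by move=> n_gt0 ->; rewrite scalerA mulfVK // gt_eqF. Qed.

Theorem theorem1 (R : realType)
  (rho_p rho_ac va ud CD rho_snp dT : R)
  (delta Nd : nat) (rd : 'I_Nd -> vec3 R)
  (Ta : vec3 R -> vec3 R -> R -> R) (Td : ('I_Nd -> vec3 R) -> vec3 R -> R)
  (u : vec3 R) (Rhat : R) (r : vec3 R) :
  0 < rho_p -> 0 < rho_ac -> 0 < va -> 0 < ud -> 0 < CD -> 0 < rho_snp ->
  0 <= dT -> (2 <= delta)%N ->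
  enorm u = 1 ->
  (* hypothesis on the defenders' gathering time along direction u *)
  (forall Rr : R, rho_p < Rr ->
     Td rd (Rr *: u) <= Tbar_d ud CD (varrho_bar delta rd rho_snp u Rr)) ->
  (* hypothesis on the attackers' time along direction u *)
  (forall (Rr : R) (r' : vec3 R), rho_p < Rr -> r' = enorm r' *: u ->
     Ta r' (Rr *: u) rho_ac >= (enorm r' - Rr - rho_ac) / va) ->
  (* the minimum of f_u over R > rho_p is attained at Rhat > rho_p *)
  rho_p < Rhat ->
  (forall Rr : R, rho_p < Rr ->
     f_u ud CD rho_ac va dT rho_snp delta rd u Rhat
     <= f_u ud CD rho_ac va dT rho_snp delta rd u Rr) ->
  (* r is in Dom_est with direction u *)
  r != 0 -> r = enorm r *: u ->
  enorm r >= f_u ud CD rho_ac va dT rho_snp delta rd u Rhat ->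
  Dom Ta Td rho_p rd rho_ac dT r.
Proof.
move=> rho_p_gt0 rho_ac_gt0 va_gt0 ud_gt0 CD_gt0 rho_snp_gt0 dT_ge0 _ _
  HTd HTa Rhat_gt _ _ r_ray r_ge.
set n := enorm r in r_ray r_ge.
set Tb := Tbar_d ud CD (varrho_bar delta rd rho_snp u Rhat).
have Tb_gt0 : 0 < Tb by apply/Tbar_d_gt0/varrho_bar_gt0.
have margin_gt0 : 0 < va * (Tb + dT) by rewrite mulr_gt0 //; lra.
have n_gt : rho_ac + Rhat < n
  by move: r_ge; rewrite /f_u -/Tb; lra.
have n_gt0 : 0 < n by lra.
exists (Rhat / n); split; [|split].
- by rewrite ltr_pM2r ?invr_gt0.
- by rewrite ltr_pdivrMr // mulrBl mul1r divfK ?gt_eqF //; lra.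
rewrite (scale_on_ray Rhat n_gt0 r_ray).
apply: (time_margin va_gt0 _ (HTa _ _ Rhat_gt r_ray) (HTd _ Rhat_gt)).
exact: r_ge.
Qed.
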